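(* Let $k\ge1$, let $l\le m$ be positive integers, and let $P$ be a polynomial with $P(m)>0$. Let $S_{l,P(m)}=\{A\in M_l : |\mathcal{V}(X\otimes Y=A)|>P(m)\}$. Then $|S_{l,P(m)}|\le \dfrac{m^{k^2+1}}{P(m)}\,|M_l|$.
   Context: Max-times product on $\mathrm{Mat}_k(\mathbb{Z}_{\geq 1})$: $(X\otimes Y)_{ij}=\max_{1\le l\le k}(x_{il}\cdot y_{lj})$. For $a\ge1$, $\mathrm{size}_2(a)=\lfloor\log_2 a\rfloor+1$; for a $k\times k$ matrix $A$, $\mathrm{size}_2(A)=\sum_{i,j}\mathrm{size}_2(a_{ij})+k^2-1$. $M_l=\{A\in\mathrm{Mat}_k(\mathbb{Z}_{\geq 1}) : \mathrm{size}_2(A)=l\}$. For $A\in\mathrm{Mat}_k(\mathbb{Z}_{\geq 1})$, $\mathcal{V}(X\otimes Y=A)$ is the set of pairs $(X,Y)\in\mathrm{Mat}_k(\mathbb{Z}_{\geq 1})^2$ with $X\otimes Y=A$. *)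

From HB Require Import structures.
From mathcomp Require Import all_boot all_order all_algebra.
From mathcomp Require Import boolp classical_sets cardinality.
From mathcomp Require Import finmap.
Set Implicit Arguments. Unset Strict Implicit. Unset Printing Implicit Defensive.
Import Order.TTheory GRing.Theory Num.Theory.
Local Open Scope classical_set_scope.

Definition posmx (k : nat) (A : 'M[nat]_k) : Prop := forall i j, (0 < A i j)%N.

Definition maxtimes (k : nat) (X Y : 'M[nat]_k) : 'M[nat]_k :=
  \matrix_(i, j) \max_(l < k) (X i l * Y l j)%N.

Definition size2 (a : nat) : nat := (trunc_log 2 a).+1.

Definition size2mx (k : nat) (A : 'M[nat]_k) : nat :=
  ((\sum_(i < k) \sum_(j < k) size2 (A i j)) + k ^ 2 - 1)%N.

Definition Ml (k l : nat) : set 'M[nat]_k :=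
  [set A | posmx A /\ size2mx A = l].

Definition Vsol (k : nat) (A : 'M[nat]_k) : set ('M[nat]_k * 'M[nat]_k) :=
  [set XY | posmx XY.1 /\ posmx XY.2 /\ maxtimes XY.1 XY.2 = A].

(* cardinality of a finite set (fset_set of an infinite set is empty; all sets
   to which we apply it are finite) *)
Definition ncard (T : choiceType) (A : set T) : nat := #|` fset_set A|%fset.

From HB Require Import structures.
From mathcomp Require Import all_boot all_order all_algebra.
From mathcomp Require Import boolp classical_sets functions cardinality reals.
From mathcomp Require Import finmap zify.
Import Order.TTheory GRing.Theory Num.Theory.

Set Implicit Arguments.
Unset Strict Implicit.
Unset Printing Implicit Defensive.

(* Call (X, Y) a factor pair when X, Y are positive and X (x) Y lies in M_l.
   Every A counted on the left has more than P(m) factorizations, so the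
   left-hand side times P(m) is at most the number of factor pairs.  These
   inject into M_l x {0, .., m-1}^(k^2+1): from floor(log2 x_il) +
   floor(log2 y_lj) <= floor(log2 a_ij), averaged over l, the log-sizes of X
   and Y add up to at most that of A.  Writing each x_ij in binary followed by
   the bits of y_ij below its leading one, and padding one entry by the
   remaining gap, yields a matrix of M_l; the bit lengths of the y_ij and the
   gap, all below m, are recorded so that the concatenation can be undone. *)

Local Open Scope classical_set_scope.

Lemma ncard_set0 (T : choiceType) : ncard (set0 : set T) = 0%N.
Proof. by rewrite /ncard fset_set0 cardfs0. Qed.

Lemma ncard_seq (T : choiceType) (s : seq T) : uniq s -> ncard [set` s] = size s.
Proof.
move=> us; rewrite /ncard; apply: perm_size; apply: uniq_perm => // x.
by rewrite in_fset_set //; apply/idP/idP => [/set_mem | /mem_set].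
Qed.

Lemma ncard_setT (F : finType) : ncard [set: F] = #|F|.
Proof.
rewrite cardE -ncard_seq ?enum_uniq //; congr ncard.
by apply/seteqP; split=> x //= _; rewrite mem_enum.
Qed.

Lemma ncard_le_inj (T U : choiceType) (A : set T) (B : set U) (f : T -> U) :
  finite_set B -> set_inj A f -> set_fun A B f ->
  finite_set A /\ (ncard A <= ncard B)%N.
Proof.
move=> fB finj fAB.
have fA : finite_set A.
  apply: card_le_finite fB.
  have [g] : $|{injfun A >-> B}| by apply/injfunPex; exists f.
  exact: inj_card_le.
split=> //; rewrite /ncard.
have <- : #|` [fset f x | x in fset_set A]%fset| = #|` fset_set A|.
  by apply: card_in_imfset => x y xA yA; apply: finj; rewrite -(in_fset_set fA).
apply: fsubset_leq_card; apply/fsubsetP => _ /imfsetP [x /= + ->].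
by rewrite !in_fset_set // => /set_mem/fAB/mem_set.
Qed.

Lemma ncardX (T U : choiceType) (A : set T) (B : set U) :
  finite_set A -> finite_set B -> ncard (A `*` B) = (ncard A * ncard B)%N.
Proof.
move=> fA fB; rewrite -[in LHS](fset_setK fA) -[in LHS](fset_setK fB).
set s := enum_fset (fset_set A); set t := enum_fset (fset_set B).
rewrite (_ : [set` _] `*` [set` _] = [set` [seq (x, y) | x <- s, y <- t]]).
  by rewrite ncard_seq ?size_allpairs // allpairs_uniq ?fset_uniq // => -[??] [??].
apply/seteqP; split=> -[x y] /=.
  by move=> [xs yt]; apply/allpairsP; exists (x, y).
by case/allpairsP => -[x' y'] /= [xs yt [-> ->]].
Qed.

Lemma ncard_fibers_ge (T U : choiceType) (W : set T) (S : set U) (f : T -> U)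
    (q : nat) :
  finite_set W -> (forall y, S y -> (q <= ncard (W `&` f @^-1` [set y]))%N) ->
  (ncard S * q <= ncard W)%N.
Proof.
move=> fW Sq; have [->|q0] := posnP q; first by rewrite muln0.
pose F y := W `&` f @^-1` [set y].
have fF y : finite_set (F y) by apply: sub_finite_set fW => x [].
have F_nonempty y : S y -> F y !=set0.
  move=> Sy; apply/set0P/eqP => F0; have := Sq y Sy.
  by rewrite -/(F y) F0 ncard_set0 leqNgt q0.
have [->|/set0P[y0 /F_nonempty [x0 _]]] := eqVneq S set0.
  by rewrite ncard_set0.
pose g (yt : U * 'I_q) := nth x0 (enum_fset (fset_set (F yt.1))) yt.2.
have gF y (t : 'I_q) : S y -> F y (g (y, t)).
  move=> Sy; apply: set_mem; rewrite -(in_fset_set (fF y)) mem_nth //.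
  exact: leq_trans (ltn_ord t) (Sq y Sy).
have fS : finite_set S.
  apply: sub_finite_set (finite_image f fW) => y /F_nonempty [x [Wx fx]].
  by exists x.
have g_fun : set_fun (S `*` [set: 'I_q]) W g.
  by move=> [y t] [Sy _]; have [] := gF y t Sy.
have g_inj : set_inj (S `*` [set: 'I_q]) g.
  move=> [y t] [y' t'] /set_mem[Sy _] /set_mem[Sy' _] eg.
  have yy' : y = y'.
    have [_ fy] := gF y t Sy; have [_ fy'] := gF y' t' Sy'.
    by rewrite -fy -fy' eg.
  subst y'; congr (_, _); apply: val_inj => /=.
  have t_lt (s : 'I_q) : (s < size (enum_fset (fset_set (F y))))%N.
    exact: leq_trans (ltn_ord s) (Sq y Sy).
  by apply/eqP; rewrite -(nth_uniq x0 (t_lt t) (t_lt t') (fset_uniq _)); apply/eqP.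
have [_] := ncard_le_inj fW g_inj g_fun.
by rewrite ncardX ?ncard_setT ?card_ord //; exact: finite_finset.
Qed.

Lemma trunc_log_mul_ge p x y : 1 < p -> 0 < x -> 0 < y ->
  trunc_log p x + trunc_log p y <= trunc_log p (x * y).
Proof.
by move=> p1 x0 y0; apply: trunc_log_max; rewrite // expnD leq_mul ?trunc_logP.
Qed.

Lemma trunc_log_mulDexp p x c r : 1 < p -> 0 < x -> r < p ^ c ->
  trunc_log p (x * p ^ c + r) = trunc_log p x + c.
Proof.
move=> p1 x0 rc; apply: trunc_log_eq => //; apply/andP; split.
  by rewrite expnD (leq_trans _ (leq_addr _ _)) // leq_mul2r trunc_logP ?orbT.
apply: (@leq_trans (x.+1 * p ^ c)); first by rewrite mulSn addnC ltn_add2r.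
by rewrite -addSn expnD leq_mul2r trunc_log_ltn ?orbT.
Qed.

Lemma trunc_log2_split y : 0 < y -> 2 ^ trunc_log 2 y + y %% 2 ^ trunc_log 2 y = y.
Proof.
move=> y0; have lo := @trunc_logP 2 y isT y0; have := @trunc_log_ltn 2 y isT.
rewrite expnS mul2n -addnn => hi.
have -> : y %% 2 ^ trunc_log 2 y = y - 2 ^ trunc_log 2 y.
  by rewrite -{1}(subnKC lo) modnDl modn_small // ltn_subLR.
exact: subnKC.
Qed.

Definition log2_sum k (A : 'M[nat]_k) :=
  \sum_(i < k) \sum_(j < k) trunc_log 2 (A i j).

Lemma size2mxE k (A : 'M[nat]_k) : size2mx A = (log2_sum A + (k ^ 2).*2).-1.
Proof.
rewrite /size2mx /size2 -subn1 -addnn addnA; congr (_ + _ - 1).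
under eq_bigr do rewrite (eq_bigr _ (fun j _ => esym (addn1 _))) big_split /=
  sum_nat_const card_ord muln1.
by rewrite big_split /= sum_nat_const card_ord mulnn.
Qed.

Lemma log2_sum_ge k (A : 'M[nat]_k) i j : trunc_log 2 (A i j) <= log2_sum A.
Proof. by rewrite /log2_sum (bigD1 i) //= (bigD1 j) //= -addnA leq_addr. Qed.

Lemma log2_sum_Ml k l (A : 'M[nat]_k) : 0 < k -> Ml l A -> log2_sum A < l.
Proof.
move=> k0 [_ <-]; rewrite size2mxE -subn1.
suff : 0 < k ^ 2 by lia.
by rewrite expn_gt0 k0.
Qed.

Lemma Ml_entry_lt k l (A : 'M[nat]_k) i j : Ml l A -> A i j < 2 ^ l.
Proof.
have k0 : 0 < k by apply: leq_ltn_trans (ltn_ord i).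
move=> MA; apply: leq_trans (@trunc_log_ltn 2 (A i j) isT) _.
by rewrite leq_exp2l // (leq_ltn_trans (log2_sum_ge A i j)) ?log2_sum_Ml.
Qed.

Lemma finite_Ml k l : finite_set (@Ml k l).
Proof.
pose B := [set: 'M['I_(2 ^ l)]_k]; have fB : finite_set B := finite_finset.
apply: sub_finite_set (finite_image (map_mx val) fB) => A MA.
exists (\matrix_(i, j) Ordinal (Ml_entry_lt i j MA))%R => //.
by apply/matrixP => i j; rewrite !mxE.
Qed.

Lemma log2_sum_maxtimes k (X Y : 'M[nat]_k) : 0 < k -> posmx X -> posmx Y ->
  log2_sum X + log2_sum Y <= log2_sum (maxtimes X Y).
Proof.
move=> k0 pX pY; rewrite -(leq_pmul2l k0) mulnDr.
have -> : k * log2_sum X =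
    \sum_(i < k) \sum_(j < k) \sum_(l < k) trunc_log 2 (X i l).
  rewrite big_distrr; apply: eq_bigr => i _ /=.
  by rewrite sum_nat_const card_ord.
have -> : k * log2_sum Y =
    \sum_(i < k) \sum_(j < k) \sum_(l < k) trunc_log 2 (Y l j).
  by rewrite sum_nat_const card_ord /log2_sum exchange_big.
rewrite -big_split big_distrr leq_sum // => i _.
rewrite -big_split big_distrr leq_sum // => j _.
rewrite -big_split -[X in _ <= X * _]card_ord -sum_nat_const leq_sum // => l _.
rewrite mxE (leq_trans (trunc_log_mul_ge _ (pX i l) (pY l j))) // leq_trunc_log //.
exact: (@leq_bigmax _ (fun l0 : 'I_k => X i l0 * Y l0 j) l).
Qed.

Definition factor_pairs {k} l : set ('M[nat]_k * 'M[nat]_k) :=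
  [set XY | posmx XY.1 /\ posmx XY.2 /\ Ml l (maxtimes XY.1 XY.2)].

Section Encoding.
Variables (k n : nat) (i0 : 'I_k).

Definition log2_gap (X Y : 'M[nat]_k) :=
  log2_sum (maxtimes X Y) - (log2_sum X + log2_sum Y).

Definition split_exp (E : 'M[nat]_k) (g : nat) i j :=
  E i j + (if (i == i0) && (j == i0) then g else 0).

Definition encode_mx (X Y : 'M[nat]_k) : 'M[nat]_k :=
  (\matrix_(i, j) (X i j * 2 ^ split_exp (map_mx (trunc_log 2) Y) (log2_gap X Y) i j
                   + Y i j %% 2 ^ trunc_log 2 (Y i j))%N)%R.

Definition encode (XY : 'M[nat]_k * 'M[nat]_k) :
    'M[nat]_k * ('M['I_n.+1]_k * 'I_n.+1) :=
  (encode_mx XY.1 XY.2,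
   (map_mx inord (map_mx (trunc_log 2) XY.2), inord (log2_gap XY.1 XY.2))).

Definition decode (c : 'M[nat]_k * ('M['I_n.+1]_k * 'I_n.+1)) :
    'M[nat]_k * 'M[nat]_k :=
  let: (B, (E, g)) := c in
  let s := split_exp (map_mx (@nat_of_ord n.+1) E) g in
  ((\matrix_(i, j) (B i j %/ 2 ^ s i j)%N)%R,
   (\matrix_(i, j) (2 ^ E i j + B i j %% 2 ^ s i j)%N)%R).

Lemma sum_split_exp (E : 'M[nat]_k) g :
  \sum_(i < k) \sum_(j < k) split_exp E g i j = \sum_(i < k) \sum_(j < k) E i j + g.
Proof.
rewrite /split_exp; under eq_bigr do rewrite big_split /=; rewrite big_split /=.
congr (_ + _); rewrite (bigD1 i0) //= [X in _ + X]big1 ?addn0; last first.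
  by move=> i /negbTE ->; apply: big1.
rewrite (bigD1 i0) //= eqxx [X in _ + X]big1 ?addn0 // => j /negbTE ->.
by rewrite andbF.
Qed.

Lemma mod_lt_split_exp (Y : 'M[nat]_k) g i j : 0 < Y i j ->
  Y i j %% 2 ^ trunc_log 2 (Y i j) < 2 ^ split_exp (map_mx (trunc_log 2) Y) g i j.
Proof.
move=> Y0; rewrite (leq_trans (ltn_pmod _ _)) ?expn_gt0 //.
by rewrite leq_exp2l // /split_exp mxE leq_addr.
Qed.

Lemma encode_mx_Ml l XY : factor_pairs l XY -> Ml l (encode_mx XY.1 XY.2).
Proof.
case: XY => X Y [/= pX [pY [_ <-]]].
have k0 : 0 < k by apply: leq_ltn_trans (ltn_ord i0).
split=> [i j|]; first by rewrite mxE ltn_addr // muln_gt0 pX expn_gt0.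
rewrite !size2mxE; congr (_ + _).-1.
transitivity (\sum_(i < k) \sum_(j < k)
    (trunc_log 2 (X i j) + split_exp (map_mx (trunc_log 2) Y) (log2_gap X Y) i j)).
  apply: eq_bigr => i _; apply: eq_bigr => j _.
  by rewrite mxE trunc_log_mulDexp ?mod_lt_split_exp.
under eq_bigr do rewrite big_split /=; rewrite big_split /= sum_split_exp.
have -> : \sum_(i < k) \sum_(j < k) map_mx (trunc_log 2) Y i j = log2_sum Y.
  by apply: eq_bigr => i _; apply: eq_bigr => j _; rewrite mxE.
by rewrite /log2_gap addnA subnKC // log2_sum_maxtimes.
Qed.

Lemma encodeK l XY : l <= n.+1 -> factor_pairs l XY -> decode (encode XY) = XY.
Proof.
case: XY => X Y ln WXY; have [/= pX [pY MA]] := WXY.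
have k0 : 0 < k by apply: leq_ltn_trans (ltn_ord i0).
have sumA := log2_sum_Ml k0 MA; have key := log2_sum_maxtimes k0 pX pY.
have gap_le : log2_gap X Y < n.+1 by rewrite /log2_gap; lia.
have logY_le i j : trunc_log 2 (Y i j) < n.+1.
  by have := log2_sum_ge Y i j; lia.
have E_val : map_mx (@nat_of_ord n.+1) (map_mx inord (map_mx (trunc_log 2) Y))
    = map_mx (trunc_log 2) Y.
  by apply/matrixP => i j; rewrite !mxE inordK.
rewrite /decode /= E_val inordK //.
congr (_, _); apply/matrixP => i j; rewrite !mxE.
  by rewrite divnMDl ?expn_gt0 // divn_small ?addn0 ?mod_lt_split_exp.
by rewrite modnMDl modn_small ?mod_lt_split_exp // inordK // trunc_log2_split.
Qed.

End Encoding.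

Lemma factor_pairs_bounded k l n : 0 < k -> l <= n.+1 ->
  finite_set (@factor_pairs k l) /\
  ncard (@factor_pairs k l) <= ncard (@Ml k l) * n.+1 ^ (k ^ 2 + 1).
Proof.
move=> k0 ln; pose i0 := Ordinal k0.
have encode_inj : set_inj (factor_pairs l) (encode n i0).
  move=> XY XY' /set_mem WXY /set_mem WXY' e.
  by rewrite -(encodeK i0 ln WXY) -(encodeK i0 ln WXY') e.
have encode_fun : set_fun (factor_pairs l)
    (Ml l `*` [set: 'M['I_n.+1]_k * 'I_n.+1]) (encode n i0).
  by move=> XY WXY; split=> //; apply: encode_mx_Ml.
have fMl := finite_Ml k l.
have [fW] := ncard_le_inj (finite_setX fMl finite_finset) encode_inj encode_fun.
rewrite (ncardX fMl finite_finset) ncard_setT card_prod card_mx !card_ord.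
by rewrite mulnn expnD expn1 mulnA.
Qed.

Lemma Vsol_factor_pairs k l (A : 'M[nat]_k) : Ml l A ->
  Vsol A = factor_pairs l `&` (fun XY => maxtimes XY.1 XY.2) @^-1` [set A].
Proof.
move=> MA; apply/seteqP; split=> [XY [pX [pY e]] | XY [[pX [pY _]] e]] //.
by split=> //=; rewrite /factor_pairs /= e.
Qed.

Local Open Scope ring_scope.

Theorem mainTheorem15 (R : realType) (k l m : nat) (P : {poly R}) :
  (1 <= k)%N -> (1 <= l)%N -> (l <= m)%N -> 0 < P.[m%:R] ->
  (ncard [set A | @Ml k l A /\ P.[m%:R] < (ncard (Vsol A))%:R]%classic)%:R
    <= (m%:R) ^+ (k ^ 2 + 1) / P.[m%:R] * (ncard (@Ml k l))%:R.
Proof.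
move=> k0 l1; case: m => [|n] ln P0; first by have := leq_trans l1 ln.
set p := P.[_] in P0 *; set S := [set A | _]%classic.
pose q := (Num.truncn p).+1.
have [fW cW] := factor_pairs_bounded k0 ln.
have cS : (ncard S * q <= ncard (@factor_pairs k l))%N.
  apply: (ncard_fibers_ge (f := fun XY => maxtimes XY.1 XY.2)) fW _ => A [MA pA].
  rewrite -Vsol_factor_pairs //.
  by rewrite /q truncn_lt_nat // ltW.
rewrite mulrAC ler_pdivlMr // (@le_trans _ _ (ncard S * q)%:R) //.
  by rewrite natrM ler_wpM2l // ltW // truncnS_gt.
by rewrite -natrX -natrM ler_nat [X in (_ <= X)%N]mulnC (leq_trans cS).
Qed.
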